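(* Let $\mathfrak{g}=\mathfrak{sl}(2,\mathbb{R})$, with basis $(Y_1,Y_2,Y_3)$ satisfying $[Y_1,Y_2]=Y_3$, $[Y_1,Y_3]=Y_2$, $[Y_2,Y_3]=Y_1$, and with basis $(H,X_+,X_-)$ where $H=\begin{pmatrix}1&0\\0&-1\end{pmatrix}$, $X_+=\begin{pmatrix}0&1\\0&0\end{pmatrix}$, $X_-=\begin{pmatrix}0&0\\-1&0\end{pmatrix}$ (so $[H,X_+]=2X_+$, $[H,X_-]=-2X_-$, $[X_+,X_-]=H$, and $Y_1=\frac12 H$, $Y_2=\frac12(X_+-X_-)$, $Y_3=\frac12(X_++X_-)$). Let $J:\mathfrak{g}\to\mathfrak{g}$ be any linear map. Then $J$ has zero torsion if and only if it is equivalent to the endomorphism whose matrix in the basis $(Y_1,Y_2,Y_3)$ is $$J_*(\lambda)=\begin{pmatrix}0&0&-1\\0&\lambda&0\\1&0&0\end{pmatrix}$$ for some $\lambda\in\mathbb{R}$, and $J_*(\lambda)\not\equiv J_*(\mu)$ for $\lambda\neq\mu$. Equivalently, $J$ has zero torsion if and only if it is equivalent to the endomorphism whose matrix in the basis $(H,X_+,X_-)$ is $$J(\alpha)=\begin{pmatrix}0&-\frac12&-\frac12\\1&\alpha&-\alpha\\1&-\alpha&\alpha\end{pmatrix}$$ for some $\alpha\in\mathbb{R}$, and $J(\alpha)\not\equiv J(\beta)$ for $\alpha\neq\beta$.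
   Context: A linear map $J:\mathfrak{g}\to\mathfrak{g}$ on a real Lie algebra has zero torsion if $[JX,JY]-[X,Y]-J[JX,Y]-J[X,JY]=0$ for all $X,Y\in\mathfrak{g}$. Two linear maps $J,J'$ on $\mathfrak{g}$ are equivalent ($J\equiv J'$) if there is a Lie algebra automorphism $\Phi\in\mathrm{Aut}\,\mathfrak{g}$ with $J'=\Phi\circ J\circ\Phi^{-1}$. The matrix of a linear map in a basis $(e_j)$ is $(\xi^i_j)$ with $Je_j=\sum_i\xi^i_j e_i$ (the $j$-th column gives the coordinates of $Je_j$). *)

From HB Require Import structures.
From mathcomp Require Import all_boot all_order all_algebra.
From mathcomp Require Import reals.
Set Implicit Arguments. Unset Strict Implicit. Unset Printing Implicit Defensive.
Import Order.TTheory GRing.Theory Num.Theory.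
Local Open Scope ring_scope.

(* The Lie algebra g = sl(2,R) is modelled as column vectors of coordinates
   in the basis (Y_1,Y_2,Y_3) (indices 0,1,2), with bracket determined by
   [Y1,Y2]=Y3, [Y1,Y3]=Y2, [Y2,Y3]=Y1. *)
Section Sl2.
Variable R : realType.

Definition sl2 := 'cV[R]_3.

Definition lb (x y : sl2) : sl2 :=
  let x1 := x 0 0 in let x2 := x 1 0 in let x3 := x 2%:R 0 in
  let y1 := y 0 0 in let y2 := y 1 0 in let y3 := y 2%:R 0 in
  \col_(i < 3) nth 0 [:: x2 * y3 - x3 * y2; x1 * y3 - x3 * y1; x1 * y2 - x2 * y1] i.

(* A linear map g -> g is represented by its matrix in the basis (Y_i):
   column j = coordinates of J Y_j; J acts by J *m x. *)
Definition torsion_free (J : 'M[R]_3) : Prop :=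
  forall x y : sl2,
    lb (J *m x) (J *m y) - lb x y - J *m lb (J *m x) y - J *m lb x (J *m y) = 0.

Definition lie_aut (P : 'M[R]_3) : Prop :=
  P \in unitmx /\ forall x y : sl2, P *m lb x y = lb (P *m x) (P *m y).

Definition equivJ (J J' : 'M[R]_3) : Prop :=
  exists P, lie_aut P /\ J' = P *m J *m invmx P.

Definition mx3 (a : seq (seq R)) : 'M[R]_3 :=
  \matrix_(i < 3, j < 3) nth 0 (nth [::] a i) j.

Definition Jstar (l : R) : 'M[R]_3 :=
  mx3 [:: [:: 0; 0; -1]; [:: 0; l; 0]; [:: 1; 0; 0]].

(* Coordinates of H = 2 Y1, X+ = Y2 + Y3, X- = Y3 - Y2 in the basis (Y_i),
   as the columns of the change-of-basis matrix. *)
Definition BHX : 'M[R]_3 :=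
  mx3 [:: [:: 2; 0; 0]; [:: 0; 1; -1]; [:: 0; 1; 1]].

Definition endo_HX (M : 'M[R]_3) : 'M[R]_3 := BHX *m M *m invmx BHX.

Definition Jalpha (a : R) : 'M[R]_3 :=
  mx3 [:: [:: 0; -(1/2); -(1/2)]; [:: 1; a; -a]; [:: 1; -a; a]].

End Sl2.

From HB Require Import structures.
From mathcomp Require Import all_boot all_order all_algebra.
From mathcomp Require Import reals.
From mathcomp Require Import ring lra.
Import Order.TTheory GRing.Theory Num.Theory.
Local Open Scope ring_scope.
Set Implicit Arguments. Unset Strict Implicit. Unset Printing Implicit Defensive.

(* Write J x = [x, u] + S x with S self-adjoint for the invariant form B.  The
   torsion equations force B(u, u) = -1.  A B-reflection reverses the bracket, so a
   product of two of them is an automorphism; with two reflections Aut g moves u to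
   Y_2, and for the axis Y_2 the torsion equations leave only S = diag(0, t, 0),
   i.e. J = J_*(t).  Conversely J_*(t) is torsion-free, torsion-freeness is invariant
   under equivalence, and the trace separates the J_*(t).  In the basis (H, X+, X-),
   J(a) is J_*(2a). *)

Section Coordinates.
Variable R : realType.
Implicit Types (a b c : R) (x : 'cV[R]_3).

Definition col3 a b c : 'cV[R]_3 := \col_(i < 3) nth 0 [:: a; b; c] i.

Lemma col3_eta x : x = col3 (x 0 0) (x 1 0) (x 2%:R 0).
Proof.
apply/matrixP=> i j; rewrite !mxE (ord1 j).
by case: i => [[|[|[|//]]] Hi]; congr (x _ _); apply: val_inj.
Qed.

Lemma col3_inj a b c a' b' c' :
  col3 a b c = col3 a' b' c' -> [/\ a = a', b = b' & c = c'].
Proof.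
move=> E; split.
- by have := congr1 (fun v : 'cV[R]_3 => v 0 0) E; rewrite !mxE.
- by have := congr1 (fun v : 'cV[R]_3 => v 1 0) E; rewrite !mxE.
- by have := congr1 (fun v : 'cV[R]_3 => v 2%:R 0) E; rewrite !mxE.
Qed.

Lemma col3_0 : 0 = col3 0 0 0 :> 'cV[R]_3.
Proof. by apply/matrixP=> i j; rewrite !mxE; case: i => [[|[|[|//]]] Hi]. Qed.

Lemma col3D a b c a' b' c' : col3 a b c + col3 a' b' c' = col3 (a + a') (b + b') (c + c').
Proof. by apply/matrixP=> i j; rewrite !mxE; case: i => [[|[|[|//]]] Hi]. Qed.

Lemma col3N a b c : - col3 a b c = col3 (- a) (- b) (- c).
Proof. by apply/matrixP=> i j; rewrite !mxE; case: i => [[|[|[|//]]] Hi]. Qed.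

Lemma col3B a b c a' b' c' : col3 a b c - col3 a' b' c' = col3 (a - a') (b - b') (c - c').
Proof. by rewrite col3N col3D. Qed.

Lemma col3Z k a b c : k *: col3 a b c = col3 (k * a) (k * b) (k * c).
Proof. by apply/matrixP=> i j; rewrite !mxE; case: i => [[|[|[|//]]] Hi]. Qed.

Lemma mx3_eta (M : 'M[R]_3) : M =
  mx3 [:: [:: M 0 0; M 0 1; M 0 2%:R]; [:: M 1 0; M 1 1; M 1 2%:R];
          [:: M 2%:R 0; M 2%:R 1; M 2%:R 2%:R]].
Proof.
apply/matrixP=> i j; rewrite !mxE.
by case: i => [[|[|[|//]]] Hi]; case: j => [[|[|[|//]]] Hj]; congr (M _ _); apply: val_inj.
Qed.

Lemma mx3_mul_col3 m00 m01 m02 m10 m11 m12 m20 m21 m22 a b c :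
  mx3 [:: [:: m00; m01; m02]; [:: m10; m11; m12]; [:: m20; m21; m22]] *m col3 a b c =
  col3 (m00 * a + m01 * b + m02 * c) (m10 * a + m11 * b + m12 * c)
       (m20 * a + m21 * b + m22 * c).
Proof.
apply/matrixP=> i j; rewrite !mxE !big_ord_recr big_ord0 /= !mxE add0r.
by case: i => [[|[|[|//]]] Hi].
Qed.

Lemma mxcol_inj (A B : 'M[R]_3) : (forall x, A *m x = B *m x) -> A = B.
Proof.
move=> AB; apply/matrixP=> i j.
by have := congr1 (fun v : 'cV[R]_3 => v i 0) (AB (delta_mx j 0)); rewrite -!colE !mxE.
Qed.

Lemma lb_col3 a b c a' b' c' :
  lb (col3 a b c) (col3 a' b' c') = col3 (b * c' - c * b') (a * c' - c * a') (a * b' - b * a').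
Proof. by apply/matrixP=> i j; rewrite !mxE. Qed.

End Coordinates.

Section InvariantForm.
Variable R : realType.
Implicit Types (a b c d e f : R) (u v w x y : 'cV[R]_3) (J P S : 'M[R]_3).

(* Half the Killing form of sl(2,R) in the basis (Y_1, Y_2, Y_3). *)
Definition kform x y : R := x 0 0 * y 0 0 - x 1 0 * y 1 0 + x 2%:R 0 * y 2%:R 0.

Lemma kform_col3 a b c a' b' c' : kform (col3 a b c) (col3 a' b' c') = a * a' - b * b' + c * c'.
Proof. by rewrite /kform !mxE. Qed.

Definition kisometry (P : 'M[R]_3) := forall x y, kform (P *m x) (P *m y) = kform x y.

Definition kselfadj (S : 'M[R]_3) := forall x y, kform (S *m x) y = kform x (S *m y).

Definition adr (u : 'cV[R]_3) : 'M[R]_3 :=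
  mx3 [:: [:: 0; u 2%:R 0; - u 1 0]; [:: u 2%:R 0; 0; - u 0 0]; [:: u 1 0; - u 0 0; 0]].

Lemma adrE u x : adr u *m x = lb x u.
Proof.
rewrite (col3_eta x) (col3_eta u) /adr !mxE /= mx3_mul_col3 lb_col3.
by congr col3; ring.
Qed.

Definition smx a b c d e f : 'M[R]_3 := mx3 [:: [:: a; b; c]; [:: - b; - d; - e]; [:: c; e; f]].

Lemma kselfadjP S : kselfadj S ->
  S = smx (S 0 0) (S 0 1) (S 0 2%:R) (- S 1 1) (- S 1 2%:R) (S 2%:R 2%:R).
Proof.
move=> hS; rewrite {1}(mx3_eta S) /smx !opprK.
have sym i j := hS (delta_mx i 0) (delta_mx j 0).
have := sym 0 1; have := sym 0 2%:R; have := sym 1 2%:R.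
rewrite -!colE /kform !mxE /= => h12 h02 h01.
by congr (mx3 [:: [:: _; _; _]; [:: _; _; _]; [:: _; _; _]]); lra.
Qed.

Lemma kselfadj_smx a b c d e f : kselfadj (smx a b c d e f).
Proof.
move=> x y; rewrite (col3_eta x) (col3_eta y) /smx !mx3_mul_col3 !kform_col3; ring.
Qed.

Lemma adr_smx_decomp J : exists u a b c d e f, J = adr u + smx a b c d e f.
Proof.
exists (col3 (- (J 1 2%:R + J 2%:R 1) / 2) ((J 2%:R 0 - J 0 2%:R) / 2) ((J 0 1 + J 1 0) / 2)).
exists (J 0 0), ((J 0 1 - J 1 0) / 2), ((J 0 2%:R + J 2%:R 0) / 2), (- J 1 1).
exists ((J 2%:R 1 - J 1 2%:R) / 2), (J 2%:R 2%:R).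
rewrite {1}(mx3_eta J) /adr /smx; apply/matrixP=> i j; rewrite !mxE /=.
by case: i => [[|[|[|//]]] Hi]; case: j => [[|[|[|//]]] Hj]; rewrite /=; field.
Qed.

Lemma lie_aut_unit P : lie_aut P -> P \in unitmx.
Proof. by case. Qed.

Lemma lie_aut_inv P : lie_aut P -> lie_aut (invmx P).
Proof.
move=> [Pu Paut]; split; first by rewrite unitmx_inv.
move=> x y; apply: (can_inj (mulKmx Pu)).
by rewrite Paut !mulKVmx.
Qed.

Lemma adr_conj P u : lie_aut P -> P *m adr u *m invmx P = adr (P *m u).
Proof.
move=> [Pu Paut]; apply: mxcol_inj => x.
by rewrite -!mulmxA !adrE Paut mulKVmx.
Qed.

Lemma kselfadj_conj P S : P \in unitmx -> kisometry P -> kselfadj S ->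
  kselfadj (P *m S *m invmx P).
Proof.
move=> Pu PI hS x y.
rewrite -{1}(mulKVmx Pu y) -{2}(mulKVmx Pu x) -!mulmxA !PI.
exact: hS.
Qed.

Definition kdual v : 'rV[R]_3 := (col3 (v 0 0) (- v 1 0) (v 2%:R 0))^T.

Lemma kdualE v x : kdual v *m x = (kform x v)%:M.
Proof.
rewrite [in LHS](col3_eta x); apply/matrixP=> i j.
by rewrite (ord1 i) (ord1 j) !mxE !big_ord_recr big_ord0 /= !mxE /= /kform; ring.
Qed.

Definition refl v : 'M[R]_3 := 1%:M - (2 / kform v v) *: (v *m kdual v).

Lemma reflE v x : refl v *m x = x - (2 * kform x v / kform v v) *: v.
Proof.
by rewrite mulmxBl mul1mx -scalemxAl -mulmxA kdualE mul_mx_scalar scalerA mulrAC.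
Qed.

Lemma refl_self v : kform v v != 0 -> refl v *m v = - v.
Proof.
move=> hv; rewrite reflE -mulrA divff // mulr1 scaler_nat mulr2n.
by rewrite opprD addrA subrr sub0r.
Qed.

Lemma refl_orth v x : kform x v = 0 -> refl v *m x = x.
Proof. by move=> hxv; rewrite reflE hxv mulr0 mul0r scale0r subr0. Qed.

Lemma kisometry_refl v : kform v v != 0 -> kisometry (refl v).
Proof.
move=> hv x y; rewrite !reflE (col3_eta x) (col3_eta y) (col3_eta v) in hv *.
by rewrite !col3Z !col3B !kform_col3 in hv *; field.
Qed.

Lemma refl_lb v x y : kform v v != 0 -> refl v *m lb x y = - lb (refl v *m x) (refl v *m y).
Proof.
move=> hv; rewrite !reflE (col3_eta x) (col3_eta y) (col3_eta v) in hv *.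
by rewrite !lb_col3 !col3Z !col3B !kform_col3 lb_col3 col3N in hv *; congr col3; field.
Qed.

Lemma refl_invol v : kform v v != 0 -> refl v *m refl v = 1%:M.
Proof.
move=> hv; apply: mxcol_inj => x; rewrite -mulmxA mul1mx !reflE.
rewrite (col3_eta x) (col3_eta v) in hv *.
by rewrite !col3Z !col3B !kform_col3 in hv *; congr col3; field.
Qed.

Lemma refl_swap x y : kform x x = kform y y -> kform (x - y) (x - y) != 0 ->
  refl (x - y) *m x = y.
Proof.
move=> exy hxy; rewrite reflE.
have -> : 2 * kform x (x - y) = kform (x - y) (x - y).
  by move: exy; rewrite (col3_eta x) (col3_eta y) col3B !kform_col3 => exy; lra.
by rewrite divff // scale1r opprB addrC subrK.
Qed.

Lemma kisometry_mul P Q : kisometry P -> kisometry Q -> kisometry (P *m Q).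
Proof. by move=> hP hQ x y; rewrite -!mulmxA hP hQ. Qed.

Lemma lie_aut_refl2 v w : kform v v != 0 -> kform w w != 0 -> lie_aut (refl v *m refl w).
Proof.
move=> hv hw; split.
  have inv : refl v *m refl w *m (refl w *m refl v) = 1%:M.
    by rewrite mulmxA -(mulmxA (refl v)) refl_invol // mulmx1 refl_invol.
  by case: (mulmx1_unit inv).
by move=> x y; rewrite -!mulmxA (refl_lb _ _ hw) mulmxN (refl_lb _ _ hv) opprK.
Qed.

Lemma timelike_transitive u : kform u u = -1 ->
  exists P, [/\ lie_aut P, kisometry P & P *m u = col3 0 1 0].
Proof.
have e2_nonnull : kform (col3 0 1 0) (col3 0 1 0) != 0 :> R.
  by rewrite kform_col3 (_ : _ - _ + _ = -1) ?oppr_eq0 ?oner_eq0 //; ring.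
rewrite (col3_eta u); move: (u 0 0) (u 1 0) (u 2%:R 0) => u0 u1 u2.
rewrite kform_col3 => hu.
have [u1_ge0 | u1_lt0] := leP 0 u1.
- set v := col3 u0 u1 u2 - - col3 0 1 0.
  have hv : kform v v != 0.
    have -> : kform v v = (u0 * u0 - u1 * u1 + u2 * u2) - 2 * u1 - 1.
      by rewrite /v col3N col3B kform_col3; ring.
    by rewrite hu; apply: ltr0_neq0; lra.
  have uv : refl v *m col3 u0 u1 u2 = - col3 0 1 0.
    by apply: refl_swap hv; rewrite col3N !kform_col3 hu; ring.
  exists (refl (col3 0 1 0) *m refl v); split.
  + exact: lie_aut_refl2.
  + exact: kisometry_mul (kisometry_refl _) (kisometry_refl _).
  by rewrite -mulmxA uv mulmxN refl_self // opprK.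
- set v := col3 u0 u1 u2 - col3 0 1 0.
  have hv : kform v v != 0.
    have -> : kform v v = (u0 * u0 - u1 * u1 + u2 * u2) + 2 * u1 - 1.
      by rewrite /v col3B kform_col3; ring.
    by rewrite hu; apply: ltr0_neq0; lra.
  have uv : refl v *m col3 u0 u1 u2 = col3 0 1 0.
    by apply: refl_swap hv; rewrite !kform_col3 hu; ring.
  have e1_nonnull : kform (col3 1 0 0) (col3 1 0 0) != 0 :> R.
    by rewrite kform_col3 (_ : _ - _ + _ = 1) ?oner_eq0 //; ring.
  exists (refl (col3 1 0 0) *m refl v); split.
  + exact: lie_aut_refl2.
  + exact: kisometry_mul (kisometry_refl _) (kisometry_refl _).
  by rewrite -mulmxA uv refl_orth // kform_col3; ring.
Qed.

End InvariantForm.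

Section Torsion.
Variable R : realType.
Implicit Types (a b c d e f : R) (x y : 'cV[R]_3) (A P : 'M[R]_3).

Definition torsion (J : 'M[R]_3) x y :=
  lb (J *m x) (J *m y) - lb x y - J *m lb (J *m x) y - J *m lb x (J *m y).

Section System.
Variables u1 u2 u3 a b c d e f : R.

Local Notation J := (adr (col3 u1 u2 u3) + smx a b c d e f).
Local Notation tor1 := (2*u1*b + 2*u2*a - 2*b*e + 2*c*d).
Local Notation tor2 := (- 2*u1*d - 2*u2*b + 2*a*e - 2*b*c).
Local Notation tor3 :=
  (- u1*u1 + 2*u1*e + u2*u2 + 2*u2*c - u3*u3 - a*d - a*f + b*b + c*c + d*f - e*e - 1).
Local Notation tor4 := (2*u1*c - 2*u3*a - 2*b*f + 2*c*e).
Local Notation tor5 :=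
  (- u1*u1 - 2*u1*e + u2*u2 - u3*u3 + 2*u3*b + a*d + a*f - b*b - c*c + d*f - e*e - 1).
Local Notation tor6 := (2*u1*f - 2*u3*c - 2*a*e + 2*b*c).
Local Notation tor7 :=
  (- u1*u1 + u2*u2 - 2*u2*c - u3*u3 - 2*u3*b + a*d - a*f - b*b + c*c - d*f + e*e - 1).
Local Notation tor8 := (2*u2*e + 2*u3*d + 2*b*f - 2*c*e).
Local Notation tor9 := (- 2*u2*f - 2*u3*e - 2*b*e + 2*c*d).
Local Notation q1 := (u1*u1 - u2*u2 + u3*u3 + 1).

Lemma adr_smx_mul_col3 s0 s1 s2 : J *m col3 s0 s1 s2 =
  col3 (a * s0 + (b + u3) * s1 + (c - u2) * s2) ((u3 - b) * s0 - d * s1 - (e + u1) * s2)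
       ((c + u2) * s0 + (e - u1) * s1 + f * s2).
Proof.
by rewrite mulmxDl adrE lb_col3 /smx mx3_mul_col3 col3D; congr col3; ring.
Qed.

Lemma torsion_system :
  [/\ torsion J (col3 1 0 0) (col3 0 1 0) = col3 tor1 tor2 tor3,
      torsion J (col3 1 0 0) (col3 0 0 1) = col3 tor4 tor5 tor6
    & torsion J (col3 0 1 0) (col3 0 0 1) = col3 tor7 tor8 tor9].
Proof.
by split; rewrite /torsion !adr_smx_mul_col3 !lb_col3 !mxE /= !col3B; congr col3; ring.
Qed.

Hypothesis tfJ : torsion_free J.

Lemma torsion_free_system :
  [/\ tor1 = 0, tor2 = 0, tor3 = 0, tor4 = 0 & tor5 = 0] /\
  [/\ tor6 = 0, tor7 = 0, tor8 = 0 & tor9 = 0].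
Proof.
have [T12 T13 T23] := torsion_system.
have := tfJ (col3 1 0 0) (col3 0 1 0); rewrite -/(torsion _ _ _) T12 col3_0.
case/col3_inj=> E1 E2 E3.
have := tfJ (col3 1 0 0) (col3 0 0 1); rewrite -/(torsion _ _ _) T13 col3_0.
case/col3_inj=> E4 E5 E6.
have := tfJ (col3 0 1 0) (col3 0 0 1); rewrite -/(torsion _ _ _) T23 col3_0.
by case/col3_inj=> E7 E8 E9.
Qed.

(* Each entry of S times q1 = B(u, u) + 1 is an explicit combination of the torsion
   polynomials (a Groebner-basis certificate). *)
Lemma torsion_free_offdiag : q1 != 0 -> [/\ b = 0, c = 0, e = 0, a + d = 0 & f - a = 0].
Proof.
move=> q1_neq0; have [[E1 E2 E3 E4 E5] [E6 E7 E8 E9]] := torsion_free_system.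
have q1_mul_eq0 (r : R) : q1 * r = 0 -> r = 0.
  by move/eqP; rewrite mulf_eq0 (negbTE q1_neq0) => /eqP.
split; apply: q1_mul_eq0.
- transitivity ((e * tor1 - c * tor2 - 2 * b * tor3 - d * tor4 - b * tor5 - b * tor7 - a * tor8) / 4).
    by field.
  by rewrite E1 E2 E3 E4 E5 E7 E8; ring.
- transitivity ((f * tor1 - c * tor3 - e * tor4 - 2 * c * tor5 - b * tor6 - c * tor7 + a * tor9) / 4).
    by field.
  by rewrite E1 E3 E4 E5 E6 E7 E9; ring.
- transitivity (((3 * u3 + b) * tor1 + (a - 3 * f) * tor2 - (u1 + 3 * e) * tor3
    + (3 * u2 - c) * tor4 - (u1 + e) * tor5 + (a - d) * tor6 + (2 * u1 - 4 * e) * tor7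
    - 4 * c * tor8) / 8).
    by field.
  by rewrite E1 E2 E3 E4 E5 E6 E7 E8; ring.
- transitivity ((c * tor1 - e * tor2 - (a + d) * tor3 - b * tor4 - a * tor5 - d * tor7 - b * tor8) / 2).
    by field.
  by rewrite E1 E2 E3 E4 E5 E7 E8; ring.
- transitivity ((- c * tor1 + a * tor3 + b * tor4 + (a - f) * tor5 - e * tor6 - f * tor7 + c * tor9) / 2).
    by field.
  by rewrite E1 E3 E4 E5 E6 E7 E9; ring.
Qed.

Lemma torsion_free_axis_timelike : u1 * u1 - u2 * u2 + u3 * u3 = -1.
Proof.
apply/eqP; rewrite -subr_eq0 opprK; apply/eqP.
have [//|q1_neq0] := eqVneq q1 0.
have [b0 c0 e0 ad0 fa0] := torsion_free_offdiag q1_neq0.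
have hd : d = - a by lra.
have hf : f = a by lra.
have [[E1 E2 E3 E4 _] _] := torsion_free_system.
subst b c e d f.
have au1 : a * u1 = 0 by lra.
have au2 : a * u2 = 0 by lra.
have au3 : a * u3 = 0 by lra.
have q1E : q1 = - (a * a) by lra.
have a0 : a = 0.
  have : a * a * (a * a + 1) = 0.
    transitivity (a * a * (a * a + q1) - ((a * u1) * (a * u1) - (a * u2) * (a * u2) + (a * u3) * (a * u3))).
      by ring.
    by rewrite q1E au1 au2 au3; ring.
  move/eqP; rewrite !mulf_eq0 orbb => /orP[/eqP //|/eqP a2].
  by have := sqr_ge0 a; rewrite -expr2 in a2 *; lra.
by move: q1_neq0; rewrite q1E a0 mulr0 oppr0 eqxx.
Qed.

End System.

Lemma torsion_conj P A x y : lie_aut P ->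
  invmx P *m torsion (P *m A *m invmx P) x y = torsion A (invmx P *m x) (invmx P *m y).
Proof.
move=> hP; have [Qu Qaut] := lie_aut_inv hP; have Pu := lie_aut_unit hP.
by rewrite /torsion !mulmxBr -!mulmxA !Qaut !mulKmx.
Qed.

Lemma torsion_free_conj P A : lie_aut P -> torsion_free A -> torsion_free (P *m A *m invmx P).
Proof.
move=> hP tfA x y; have Qu : invmx P \in unitmx by rewrite unitmx_inv lie_aut_unit.
apply: (can_inj (mulKmx Qu)); rewrite -/(torsion _ _ _) torsion_conj // mulmx0.
exact: tfA.
Qed.

Lemma torsion_free_e2_axis a b c d e f :
  torsion_free (adr (col3 0 1 0) + smx a b c d e f) ->
  adr (col3 0 1 0) + smx a b c d e f = Jstar (- d).
Proof.
move=> tf; have [[E1 E2 E3 E4 E5] [E6 E7 E8 E9]] := torsion_free_system tf.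
have b0 : b = 0 by lra.
have e0 : e = 0 by lra.
subst b e.
have a_cd : a = - (c * d) by lra.
have f_cd : f = c * d by lra.
have cc_af : c * c = a * f by lra.
have c0 : c = 0.
  have : c * c * (1 + d * d) = 0.
    by transitivity (c * c - a * f); [rewrite a_cd f_cd; ring | rewrite cc_af subrr].
  move/eqP; rewrite !mulf_eq0 orbb => /orP[/eqP //|/eqP d2].
  by have := sqr_ge0 d; rewrite -expr2 in d2 *; lra.
rewrite c0 mul0r oppr0 in a_cd; rewrite c0 mul0r in f_cd; subst a c f.
apply/matrixP=> i j; rewrite !mxE /=.
by case: i => [[|[|[|//]]] Hi]; case: j => [[|[|[|//]]] Hj]; rewrite /= ?mxE /=; ring.
Qed.

Lemma torsion_free_Jstar (t : R) : torsion_free (Jstar t).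
Proof.
move=> x y; rewrite -/(torsion _ _ _) /torsion (col3_eta x) (col3_eta y) /Jstar.
by rewrite !mx3_mul_col3 !lb_col3 !mxE /= !col3B col3_0; congr col3; ring.
Qed.

Lemma equivJ_torsion_free A B : equivJ A B -> torsion_free B -> torsion_free A.
Proof.
move=> [P [hP defB]] tfB; have Pu := lie_aut_unit hP.
have -> : A = invmx P *m B *m invmx (invmx P).
  by rewrite invmxK defB !mulmxA mulVmx // mul1mx -mulmxA mulVmx // mulmx1.
exact: torsion_free_conj (lie_aut_inv hP) tfB.
Qed.

Lemma torsion_free_equivJ_Jstar (J : 'M[R]_3) : torsion_free J -> exists t, equivJ J (Jstar t).
Proof.
move=> tf; have [u [a [b [c [d [e [f defJ]]]]]]] := adr_smx_decomp J.
have hu : kform u u = -1.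
  by have := tf; rewrite defJ (col3_eta u) kform_col3 => /torsion_free_axis_timelike.
have [P [hP PI Pu]] := timelike_transitive hu.
set S := P *m smx a b c d e f *m invmx P.
have hS : kselfadj S := kselfadj_conj (lie_aut_unit hP) PI (kselfadj_smx _ _ _ _ _ _).
have J'E : P *m J *m invmx P = adr (col3 0 1 0) + S.
  by rewrite defJ mulmxDr mulmxDl adr_conj // Pu.
have := torsion_free_conj hP tf; rewrite J'E (kselfadjP hS) => /torsion_free_e2_axis J'E2.
by exists (S 1 1), P; split; rewrite // J'E [S in _ + S](kselfadjP hS) J'E2 opprK.
Qed.

Lemma equivJ_trace A B : equivJ A B -> \tr B = \tr A.
Proof.
by move=> [P [hP ->]]; rewrite mxtrace_mulC mulmxA mulVmx ?lie_aut_unit // mul1mx.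
Qed.

Lemma trace_Jstar (t : R) : \tr (Jstar t) = t.
Proof. by rewrite /mxtrace /Jstar !big_ord_recr big_ord0 /= !mxE /=; ring. Qed.

Lemma endo_HX_Jalpha (a : R) : endo_HX (Jalpha a) = Jstar (2 * a).
Proof.
have BJ : BHX R *m Jalpha a = Jstar (2 * a) *m BHX R.
  apply: mxcol_inj => x; rewrite -!mulmxA (col3_eta x) /BHX /Jalpha /Jstar !mx3_mul_col3.
  by congr col3; field.
have BHX_unit : BHX R \in unitmx.
  have inv : BHX R *m mx3 [:: [:: 1/2; 0; 0]; [:: 0; 1/2; 1/2]; [:: 0; -(1/2); 1/2]] = 1%:M.
    apply: mxcol_inj => x; rewrite mul1mx -!mulmxA (col3_eta x) /BHX !mx3_mul_col3.
    by congr col3; field.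
  by case: (mulmx1_unit inv).
by rewrite /endo_HX BJ -mulmxA mulmxV // mulmx1.
Qed.

Lemma torsion_free_iff (J : 'M[R]_3) : torsion_free J <-> exists t, equivJ J (Jstar t).
Proof.
split; first exact: torsion_free_equivJ_Jstar.
by move=> [t /equivJ_torsion_free]; apply; apply: torsion_free_Jstar.
Qed.

Lemma equivJ_Jstar_inj (l m : R) : equivJ (Jstar l) (Jstar m) -> l = m.
Proof. by move/equivJ_trace; rewrite !trace_Jstar. Qed.

End Torsion.

Theorem lemma1 (R : realType) :
  (forall J : 'M[R]_3, torsion_free J <-> exists l : R, equivJ J (Jstar l)) /\
  (forall l m : R, l <> m -> ~ equivJ (Jstar l) (Jstar m)) /\
  (forall J : 'M[R]_3, torsion_free J <-> exists a : R, equivJ J (endo_HX (Jalpha a))) /\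
  (forall a b : R, a <> b -> ~ equivJ (endo_HX (Jalpha a)) (endo_HX (Jalpha b))).
Proof.
split; first exact: torsion_free_iff.
split; first by move=> l m lm /equivJ_Jstar_inj.
split.
  move=> J; rewrite torsion_free_iff; split=> -[t Jt].
  - by exists (t / 2); rewrite endo_HX_Jalpha mulrC divfK // pnatr_eq0.
  - by exists (2 * t); rewrite -endo_HX_Jalpha.
move=> a b ab; rewrite !endo_HX_Jalpha => /equivJ_Jstar_inj /eqP.
by rewrite (inj_eq (mulfI _)) ?pnatr_eq0 // => /eqP.
Qed.
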